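(* Let $1\le h,t\le n$, $\mathbf j=(j_k)\in\mathbb N^n_\vartriangle$ and $A=(a_{i,j})\in\Theta^\pm_\vartriangle(n)$. The following hold in $\mathcal S_\vartriangle(n,r)_{\mathbb Q}$ for every $r\ge0$: (1) $0[\mathbf e_t,r]\,A[\mathbf j,r]=A[\mathbf j+\mathbf e_t,r]+\big(\sum_{s\in\mathbb Z}a_{t,s}\big)A[\mathbf j,r]$; (2) for $\varepsilon\in\{1,-1\}$, $$E^\vartriangle_{h,h+\varepsilon}[\mathbf 0,r]\,A[\mathbf j,r]=\sum_{i\ne h,h+\varepsilon;\ a_{h+\varepsilon,i}\ge1}(a_{h,i}+1)(A+E^\vartriangle_{h,i}-E^\vartriangle_{h+\varepsilon,i})[\mathbf j,r]+\sum_{0\le i\le j_h}(-1)^i\binom{j_h}{i}(A-E^\vartriangle_{h+\varepsilon,h})[\mathbf j+(1-i)\mathbf e_h,r]+(a_{h,h+\varepsilon}+1)\sum_{0\le i\le j_{h+\varepsilon}}\binom{j_{h+\varepsilon}}{i}(A+E^\vartriangle_{h,h+\varepsilon})[\mathbf j-i\mathbf e_{h+\varepsilon},r];$$ (3) for $m\in\mathbb Z\setminus\{0\}$, $$E^\vartriangle_{h,h+mn}[\mathbf 0,r]\,A[\mathbf j,r]=\sum_{s\notin\{h,h-mn\};\ a_{h,s}\ge1}(a_{h,s+mn}+1)(A+E^\vartriangle_{h,s+mn}-E^\vartriangle_{h,s})[\mathbf j,r]+\sum_{0\le t\le j_h}(a_{h,h+mn}+1)\binom{j_h}{t}(A+E^\vartriangle_{h,h+mn})[\mathbf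 j-t\mathbf e_h,r]+\sum_{0\le t\le j_h}(-1)^t\binom{j_h}{t}(A-E^\vartriangle_{h,h-mn})[\mathbf j+(1-t)\mathbf e_h,r].$$
   Context: Fix $n\ge2$. $I_\vartriangle(n,r)$ is the set of integer sequences $\mathbf i=(i_k)_{k\in\mathbb Z}$ with $i_{k+r}=i_k+n$, identified with $\mathbb Z^r$ via $(i_1,\dots,i_r)$. $\Omega_{\mathbb Q}^{\otimes r}$ is the $\mathbb Q$-space with basis $\omega_{\mathbf i}$ ($\mathbf i\in I_\vartriangle(n,r)$). The affine symmetric group $\mathfrak S_{\vartriangle,r}$ (bijections $w:\mathbb Z\to\mathbb Z$ with $w(k+r)=w(k)+r$) acts on the right by $\omega_{\mathbf i}w=\omega_{\mathbf iw}$, $(\mathbf iw)_k=i_{w(k)}$, and $\mathcal S_\vartriangle(n,r)_{\mathbb Q}=\mathrm{End}_{\mathbb Q\mathfrak S_{\vartriangle,r}}(\Omega_{\mathbb Q}^{\otimes r})$ with composition as product. $\Theta_\vartriangle(n)$ is the set of matrices $A=(a_{k,l})_{k,l\in\mathbb Z}$ over $\mathbb N$ with $a_{k+n,l+n}=a_{k,l}$ and finitely many nonzero entries in each row; $\sigma(A)=\sum_{1\le k\le n,\,l\in\mathbb Z}a_{k,l}$; $\Theta_\vartriangle(n,r)=\{A\in\Theta_\vartriangle(n)\mid\sigma(A)=r\}$; $\Theta^\pm_\vartriangle(n)$ is the set of $A\in\Theta_\vartriangle(n)$ with zero diagonal. For $\mathbf i,\mathbf j\in I_\vartriangle(n,r)$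 let $M(\mathbf i,\mathbf j)=(a_{k,l})$, $a_{k,l}=|\{s\in\mathbb Z\mid i_s=k,\ j_s=l\}|$; for $A\in\Theta_\vartriangle(n,r)$, $[A]_1\in\mathcal S_\vartriangle(n,r)_{\mathbb Q}$ is the map $\omega_{\mathbf j}\mapsto\sum_{\mathbf i:\,M(\mathbf i,\mathbf j)=A}\omega_{\mathbf i}$; these form a basis. $\mathbb N^n_\vartriangle$ is the set of $n$-periodic sequences of nonnegative integers (indices read mod $n$), $\mathbf e_h$ the periodic unit vector, $\Lambda_\vartriangle(n,m)=\{\lambda\in\mathbb N^n_\vartriangle\mid\sum_{i=1}^n\lambda_i=m\}$, $\mathrm{diag}(\lambda)$ the diagonal matrix with entries $\lambda_i$, and $\lambda^{\mathbf j}=\prod_{i=1}^n\lambda_i^{j_i}$ with $0^0=1$. $E^\vartriangle_{i,j}$ is the matrix with $1$ at positions $(i+sn,j+sn)$, $s\in\mathbb Z$, and $0$ elsewhere. For $A\in\Theta^\pm_\vartriangle(n)$, $A[\mathbf j,r]=\sum_{\lambda\in\Lambda_\vartriangle(n,r-\sigma(A))}\lambda^{\mathbf j}[A+\mathrm{diag}(\lambda)]_1$ if $\sigma(A)\le r$ and $0$ otherwise; moreover $A[\mathbf j,r]:=0$ if some off-diagonal entry of $A$ is negative. $0$ denotes the zero matrix. *)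

From HB Require Import structures.
From mathcomp Require Import all_boot all_order all_algebra.
From mathcomp Require Import boolp classical_sets cardinality fsbigop.

Set Implicit Arguments.
Unset Strict Implicit.
Unset Printing Implicit Defensive.
Import Order.TTheory GRing.Theory Num.Theory.
Local Open Scope ring_scope.

(* A matrix (a_{k,l})_{k,l in Z}; we allow integer entries so that A+E-E  *)
(* (possibly negative) can be formed, as in the paper.                     *)
Definition mat := int -> int -> int.
Definition nvec := int -> nat.

Definition periodic_vec (n : nat) (v : nvec) : Prop :=
  forall k : int, v (k + n%:Z) = v k.

Definition periodic_mat (n : nat) (A : mat) : Prop :=
  forall k l : int, A (k + n%:Z) (l + n%:Z) = A k l.

Definition row_finite (A : mat) : Prop :=
  forall k : int, finite_set [set l : int | A k l != 0].

Definition in_Theta_pm (n : nat) (A : mat) : Prop :=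
  [/\ periodic_mat n A, row_finite A,
      (forall k l : int, 0 <= A k l) & (forall k : int, A k k = 0)].

Definition madd (A B : mat) : mat := fun k l => A k l + B k l.
Definition msub (A B : mat) : mat := fun k l => A k l - B k l.
Definition mzero : mat := fun _ _ => 0.

Definition Emat (n : nat) (a b : int) : mat := fun k l =>
  if ((n%:Z %| k - a)%Z && (k - a == l - b)) then 1 else 0.

Definition dmat (lam : nvec) : mat := fun k l =>
  if k == l then (lam k)%:Z else 0.

Definition evec (n : nat) (h : int) : nvec := fun k =>
  if (n%:Z %| k - h)%Z then 1%N else 0%N.

Definition vadd (u v : nvec) : nvec := fun k => (u k + v k)%N.
(* truncated subtraction: only used where the result is exact *)
Definition vsub (u v : nvec) : nvec := fun k => (u k - v k)%N.
Definition vscale (c : nat) (v : nvec) : nvec := fun k => (c * v k)%N.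
Definition vzero : nvec := fun _ => 0%N.

Definition sigma (n : nat) (A : mat) : int :=
  \sum_(1 <= k < n.+1) \sum_(l \in [set: int]) A k%:Z l.

(* lambda^j = prod_{i=1}^n lambda_i^{j_i}  (0^0 = 1) *)
Definition vpow (n : nat) (lam j : nvec) : nat :=
  (\prod_(1 <= i < n.+1) (lam i%:Z) ^ (j i%:Z))%N.

(* An element lambda of Lambda_Delta(n,m) is encoded by its values on the
   residues 0..n-1 mod n (residue 0 standing for index n). *)
Definition lam_of (n m : nat) (f : {ffun 'I_n -> 'I_m.+1}) : nvec := fun k =>
  (\sum_(i < n | (n%:Z %| (k - (i : nat)%:Z)%R)%Z) (f i : nat))%N.

Definition in_Lambda (n m : nat) (f : {ffun 'I_n -> 'I_m.+1}) : bool :=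
  (\sum_(i < n) (f i : nat))%N == m.

(* I_Delta(n,r) identified with Z^r via (i_1,...,i_r); the element         *)
(* s : 'I_r stands for the index s+1.                                      *)
Definition idx (r : nat) := {ffun 'I_r -> int}.

(* M(i,j) = (a_{k,l}), a_{k,l} = |{s in Z | i_s = k, j_s = l}|, where
   i_{s+pr} = i_s + pn.  For s' = s + p r (1<=s<=r) the pair (i_{s'},j_{s'})
   equals (k,l) iff k - i_s = l - j_s = p n; so the count is over 1<=s<=r. *)
Definition Mmat (n r : nat) (i j : idx r) : mat := fun k l =>
  (\sum_(s < r) (((n%:Z %| (k - i s)%R)%Z && ((k - i s)%R == (l - j s)%R)) : nat))%N%:Z.

(* An endomorphism of Omega^{(x)r}_Q (column-finite) is given by its matrix
   of coefficients: F i j = coefficient of omega_i in F(omega_j). *)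
Definition op (r : nat) := idx r -> idx r -> rat.

Definition opadd r (F G : op r) : op r := fun i j => F i j + G i j.
Definition opscale r (c : rat) (F : op r) : op r := fun i j => c * F i j.
Definition opzero r : op r := fun _ _ => 0.
Definition opmul r (F G : op r) : op r := fun i j =>
  \sum_(k \in [set: idx r]) F i k * G k j.
Definition opsumZ r (P : set int) (F : int -> op r) : op r := fun i j =>
  \sum_(s \in P) F s i j.
Definition opsumN r (N : nat) (F : nat -> op r) : op r := fun i j =>
  \sum_(0 <= t < N.+1) F t i j.

Definition basis1 (n r : nat) (A : mat) : op r := fun i j =>
  if `[< Mmat n i j = A >] then 1 else 0.

Definition Aop (n r : nat) (A : mat) (j : nvec) : op r :=
  if `[< exists k l, A k l < 0 >] then @opzero r
  else if sigma n A <= r%:Z then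
    let m := `|r%:Z - sigma n A|%N in
    fun x y => \sum_(f : {ffun 'I_n -> 'I_m.+1} | in_Lambda f)
                 (vpow n (lam_of f) j)%:R * @basis1 n r (madd A (dmat (lam_of f))) x y
  else @opzero r.

Arguments Aop n r A j : clear implicits.
Arguments basis1 n r A : clear implicits.

From HB Require Import structures.
From mathcomp Require Import all_boot all_order all_algebra.
From mathcomp Require Import boolp classical_sets cardinality fsbigop.
From mathcomp Require Import zify ring.
Import Order.TTheory GRing.Theory Num.Theory.
Local Open Scope ring_scope.
Set Implicit Arguments.
Unset Strict Implicit.

(* The coefficient of [omega_x] in [B[j, r] omega_y] is [lambda^j] when the matrix
   [M(x, y)] agrees with [B] off the diagonal, [lambda] being its diagonal, and [0]
   otherwise.  Multiplying by [E_{h,h+d}[0, r]] replaces [x] by the indices obtained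
   by moving one [x_s] congruent to [h] by [d]; this transfers one unit of [M(x, y)]
   in column [c = y_s - x_s + h] from row [h] to row [h + d].  Grouping the terms by
   [c]: a column [c] outside [{h, h + d}] yields [A + E_{h,c} - E_{h+d,c}] with
   multiplicity [a_{h,c} + 1]; for [c = h] the diagonal entry [lambda_h] drops by one,
   for [c = h + d] the entry [lambda_{h+d}] grows by one, and the binomial theorem
   expands [(lambda_h - 1)^{j_h}] and [(lambda_{h+d} + 1)^{j_{h+d}}].  Formula (3) is
   the case [d = m n] after the change of variable [c = s + m n]; in (1) each
   coefficient is multiplied by the diagonal entry [lambda_t + sum_s a_{t,s}] of
   [M(x, x)].  All the data are [n]-periodic. *)

(** * Residues modulo [n] *)

Lemma dvdz_subC (d a b : int) : (d %| a - b)%Z = (d %| b - a)%Z.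
Proof. by rewrite -opprB rpredN. Qed.

Lemma dvdz_subl (d a b c : int) :
  (d %| a - b)%Z -> (d %| a - c)%Z = (d %| b - c)%Z.
Proof.
move=> dab; have -> : a - c = (a - b) + (b - c) by ring.
by rewrite rpredDl.
Qed.

Section Residues.

Variable n : nat.
Hypothesis n_gt0 : (0 < n)%N.

Let n_neq0 : n%:Z != 0. Proof. by rewrite eqz_nat -lt0n. Qed.

Lemma absz_modz (k : int) : (`|(k %% n)%Z|%N)%:Z = (k %% n)%Z.
Proof. by rewrite gez0_abs // modz_ge0. Qed.

Lemma modz_ltn (k : int) : (`|(k %% n)%Z| < n)%N.
Proof. by rewrite -ltz_nat absz_modz ltz_pmod // ltz_nat. Qed.

Definition ordz (k : int) : 'I_n := Ordinal (modz_ltn k).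

Lemma dvdz_ordz (i : 'I_n) (k : int) : (n%:Z %| k - i%:Z)%Z = (i == ordz k).
Proof.
rewrite -eqz_mod_dvd [(_ %% n)%Z as X in (_ == X)]modz_small; last first.
  by rewrite lez_nat ltz_nat ltn_ord.
by rewrite eq_sym -val_eqE /= -eqz_nat absz_modz.
Qed.

Definition rep1 (c : int) : nat := (ordz (c - 1)).+1.

Lemma rep1_bound (c : int) : (1 <= rep1 c <= n)%N.
Proof. exact: ltn_ord. Qed.

Lemma dvdz_rep1 (c : int) : (n%:Z %| (rep1 c)%:Z - c)%Z.
Proof.
have -> : (rep1 c)%:Z - c = ((c - 1) %% n)%Z - (c - 1).
  by rewrite /rep1 -addn1 PoszD absz_modz; ring.
by rewrite -eqz_mod_dvd modz_mod.
Qed.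

Lemma dvdz_nat_range (a b : nat) : (1 <= a <= n)%N -> (1 <= b <= n)%N ->
  (n%:Z %| a%:Z - b%:Z)%Z = (a == b).
Proof.
rewrite -!lez_nat => /andP[a1 an] /andP[b1 bn].
have -> : a%:Z - b%:Z = (a%:Z - 1) - (b%:Z - 1) by ring.
rewrite -eqz_mod_dvd !modz_small; try by apply/andP; split; lia.
by rewrite -eqz_nat; apply/eqP/eqP; lia.
Qed.

Lemma sum_dvdz_rep1 (R : nmodType) (c : int) (F : nat -> R) :
  \sum_(1 <= k < n.+1) (if (n%:Z %| k%:Z - c)%Z then F k else 0) = F (rep1 c).
Proof.
rewrite (bigD1_seq (rep1 c)) ?mem_index_iota ?rep1_bound ?iota_uniq //=.
rewrite dvdz_rep1 big1_seq ?addr0 // => k /andP[kc]; rewrite mem_index_iota => kn.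
case: ifP => // ck; move: kc; rewrite -dvdz_nat_range ?rep1_bound //.
by rewrite (dvdz_subl _ ck) dvdz_subC dvdz_rep1.
Qed.

Lemma big_ord_shift1 (R : Type) (idx : R) (op : Monoid.com_law idx) (g : int -> R) :
  (forall k, g (k + n%:Z) = g k) ->
  \big[op/idx]_(i < n) g i%:Z = \big[op/idx]_(1 <= k < n.+1) g k%:Z.
Proof.
move=> gn; rewrite -(big_mkord xpredT (fun i => g i%:Z)) big_ltn // big_nat_recr //=.
by rewrite Monoid.mulmC -[in X in op _ X](add0r n%:Z) gn.
Qed.

End Residues.

(** * Periodic vectors and matrices *)

Lemma periodicZ (T : Type) (d : int) (f : int -> T) :
  (forall k, f (k + d) = f k) -> forall k p, f (k + p * d) = f k.
Proof.
move=> fd k p; elim/int_rec: p k => [|p IH|p IH] k; first by rewrite mul0r addr0.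
  by rewrite -addn1 PoszD mulrDl mul1r addrA fd.
rewrite -addn1 PoszD opprD mulrDl mulN1r addrA -[in RHS](IH k).
by rewrite -(fd (_ - d)) subrK.
Qed.

Lemma periodic_vec_dvdz n (j : nvec) :
  periodic_vec n j -> forall a b, (n%:Z %| a - b)%Z -> j a = j b.
Proof.
by move=> jn a b /dvdzP[p abp]; rewrite -(periodicZ jn b p) -abp addrC subrK.
Qed.

Lemma periodic_matZ n (A : mat) :
  periodic_mat n A -> forall k l (p : int), A (k + p * n%:Z) (l + p * n%:Z) = A k l.
Proof.
move=> An k l p; pose f u := A u (u - k + l).
have fn : forall u, f (u + n%:Z) = f u by move=> u; rewrite /f -[RHS]An; congr A; ring.
have := periodicZ fn k p; rewrite /f subrr add0r => <-.
by congr A; ring.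
Qed.

Lemma periodic_mat_dvdz n (A : mat) : periodic_mat n A ->
  forall a b c e, (n%:Z %| a - b)%Z -> a - b = c - e -> A a c = A b e.
Proof.
move=> An a b c e /dvdzP[p abp] ace.
rewrite -(periodic_matZ An b e p) -abp; congr A; first by rewrite addrC subrK.
by rewrite ace addrC subrK.
Qed.

Lemma mat_ext (A B : mat) : (forall k l, A k l = B k l) -> A = B.
Proof. by move=> AB; apply/funext => k; apply/funext => l. Qed.

Section Elementary.

Variable n : nat.

Lemma Emat_delta (a b k l : int) : Emat n a b k l =
  if l == k - a + b then (if (n%:Z %| k - a)%Z then 1 else 0) else 0.
Proof.
rewrite /Emat; have -> : (k - a == l - b) = (l == k - a + b).
  by apply/eqP/eqP => e; [rewrite e subrK | rewrite e addrK].
by case: (l == _); rewrite ?andbT ?andbF.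
Qed.

Lemma Emat_congr (a b a' b' : int) :
  (n%:Z %| a - a')%Z -> a - a' = b - b' -> Emat n a b = Emat n a' b'.
Proof.
move=> aa' ab; apply: mat_ext => k l; rewrite /Emat.
rewrite [(_ %| k - a)%Z]dvdz_subC [(_ %| k - a')%Z]dvdz_subC (dvdz_subl _ aa').
by have -> : (k - a' == l - b') = (k - a == l - b) by apply/eqP/eqP; lia.
Qed.

Lemma Emat_periodic (a b : int) : periodic_mat n (Emat n a b).
Proof.
move=> k l; rewrite /Emat.
have -> : (n%:Z %| k + n%:Z - a)%Z = (n%:Z %| k - a)%Z by rewrite addrAC rpredDr ?dvdzz.
by have -> : (k + n%:Z - a == l + n%:Z - b) = (k - a == l - b) by apply/eqP/eqP; lia.
Qed.

Lemma Emat_ge0 (a b k l : int) : 0 <= Emat n a b k l.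
Proof. by rewrite /Emat; case: ifP. Qed.

Lemma Emat_at (a b : int) : Emat n a b a b = 1.
Proof. by rewrite /Emat !subrr dvdz0 eqxx. Qed.

Lemma Emat_diag (a b k : int) : a != b -> Emat n a b k k = 0.
Proof. by move=> ab; rewrite /Emat; case: ifP => // /andP[_ /eqP e]; lia. Qed.

Lemma Emat_offdiag (a k l : int) : k != l -> Emat n a a k l = 0.
Proof. by move=> kl; rewrite /Emat; case: ifP => // /andP[_ /eqP e]; lia. Qed.

Lemma Emat_row (a b k l : int) : ~~ (n%:Z %| k - a)%Z -> Emat n a b k l = 0.
Proof. by rewrite /Emat => /negbTE ->. Qed.

End Elementary.

(** * The matrices [M(x, y)] *)

Lemma fsum_delta (R : nmodType) (I : finType) (P : pred I) (S : set int)
    (p : I -> int) (w : I -> R) :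
  \sum_(l \in S) \sum_(s | P s) (if l == p s then w s else 0) =
  \sum_(s | P s) (if p s \in S then w s else 0).
Proof.
set u := undup [seq p s | s <- enum I].
have pu s : p s \in u by rewrite mem_undup map_f ?mem_enum.
rewrite (fsbigE [seq l <- u | l \in S]) ?filter_uniq ?undup_uniq //; first last.
- move=> l Sl; rewrite mem_filter (mem_set Sl) /= => lu.
  by apply: big1 => s _; case: eqP => // ls; rewrite ls pu in lu.
- by move=> l /=; rewrite mem_filter => /andP[/set_mem].
rewrite big_filter_cond; under eq_bigl do rewrite andbb.
rewrite exchange_big /=; apply: eq_bigr => s _; rewrite big_mkcond /=.
rewrite (bigD1_seq (p s)) ?undup_uniq //= eqxx big1 ?addr0 => [|l lp].
  by case: ifP.
by case: ifP => //; case: eqP => // e; rewrite e eqxx in lp.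
Qed.

Definition offdiag (M : mat) : mat := fun k l => if k == l then 0 else M k l.
Definition trace n (M : mat) : int := \sum_(1 <= k < n.+1) M k%:Z k%:Z.

Section Mmat.

Variables (n r : nat) (x y : idx r).

Lemma Mmat_sumE k l : Mmat n x y k l = \sum_(s < r) Emat n (x s) (y s) k l.
Proof. by rewrite /Mmat /Emat -natz natr_sum; apply: eq_bigr => s _; case: ifP. Qed.

Lemma Mmat_ge0 k l : 0 <= Mmat n x y k l.
Proof. by []. Qed.

Lemma Mmat_periodic : periodic_mat n (Mmat n x y).
Proof.
by move=> k l; rewrite !Mmat_sumE; apply: eq_bigr => s _; rewrite Emat_periodic.
Qed.

Lemma Mmat_diag k :
  Mmat n x y k k = \sum_(s < r) (if (n%:Z %| k - x s)%Z && (x s == y s) then 1 else 0).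
Proof.
rewrite Mmat_sumE; apply: eq_bigr => s _; rewrite /Emat.
by have -> : (k - x s == k - y s) = (x s == y s) by apply/eqP/eqP; lia.
Qed.

Lemma rowsum_offdiag_Mmat k :
  \sum_(l \in [set: int]) offdiag (Mmat n x y) k l =
  \sum_(s < r) (if (n%:Z %| k - x s)%Z && (x s != y s) then 1 else 0).
Proof.
pose w s : int := if (n%:Z %| k - x s)%Z && (x s != y s) then 1 else 0.
rewrite (eq_fsbigr (fun l => \sum_(s < r) if l == k - x s + y s then w s else 0)).
  by rewrite fsum_delta; under eq_bigr do rewrite in_setT.
move=> l _; rewrite /offdiag /w Mmat_sumE; case: eqP => [<-|/eqP kl].
  apply/esym/big1 => s _; case: eqP => // e.
  by rewrite (_ : x s = y s) ?eqxx ?andbF //; lia.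
apply: eq_bigr => s _; rewrite Emat_delta; case: eqP => // e.
by rewrite (_ : x s != y s) ?andbT //; apply/eqP => exy; rewrite e exy subrK eqxx in kl.
Qed.

Hypothesis n_gt0 : (0 < n)%N.

Lemma sigma_offdiag_Mmat :
  sigma n (offdiag (Mmat n x y)) = \sum_(s < r) (if x s != y s then 1 else 0).
Proof.
rewrite /sigma; under eq_bigr do rewrite rowsum_offdiag_Mmat.
rewrite exchange_big /=; apply: eq_bigr => s _.
rewrite -(sum_dvdz_rep1 n_gt0 (x s) (fun _ => if x s != y s then 1 else 0)).
by apply: eq_bigr => k _; rewrite dvdz_subC; case: (_ %| _)%Z.
Qed.

Lemma trace_Mmat : trace n (Mmat n x y) = \sum_(s < r) (if x s == y s then 1 else 0).
Proof.
rewrite /trace; under eq_bigr do rewrite Mmat_diag.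
rewrite exchange_big /=; apply: eq_bigr => s _.
rewrite -(sum_dvdz_rep1 n_gt0 (x s) (fun _ => if x s == y s then 1 else 0)).
by apply: eq_bigr => k _; rewrite dvdz_subC; case: (_ %| _)%Z.
Qed.

Lemma sigma_offdiag_add_trace :
  sigma n (offdiag (Mmat n x y)) + trace n (Mmat n x y) = r%:Z.
Proof.
rewrite sigma_offdiag_Mmat trace_Mmat -big_split /=.
by rewrite (eq_bigr (fun _ => 1)) ?sumr_const ?card_ord -?natz // => s _; case: eqP.
Qed.

End Mmat.

Lemma Mmat_diag_self n r (x y : idx r) (k : int) :
  Mmat n x x k k = Mmat n x y k k + \sum_(l \in [set: int]) offdiag (Mmat n x y) k l.
Proof.
rewrite rowsum_offdiag_Mmat !Mmat_diag -big_split /=; apply: eq_bigr => s _.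
by rewrite eqxx andbT; case: (_ %| _)%Z; case: (x s == y s).
Qed.

(** * The entries of [A[j, r]] *)

Definition offdiag_eq (M B : mat) : Prop := forall k l, k != l -> M k l = B k l.

Definition diag_pow n (M : mat) (j : nvec) : rat :=
  \prod_(1 <= i < n.+1) (M i%:Z i%:Z)%:~R ^+ j i%:Z.

Definition Acoef n (M B : mat) (j : nvec) : rat :=
  if `[< offdiag_eq M B >] then diag_pow n M j else 0.

Lemma offdiag_eqE (M B : mat) :
  (forall k, B k k = 0) -> offdiag_eq M B -> B = offdiag M.
Proof.
move=> B0 MB; apply: mat_ext => k l; rewrite /offdiag.
by case: eqP => [<-|/eqP kl]; [rewrite B0 | rewrite MB].
Qed.

Lemma madd_offdiag_dmat (M : mat) (lam : nvec) :
  madd (offdiag M) (dmat lam) = M <-> forall k, (lam k)%:Z = M k k.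
Proof.
rewrite /madd /offdiag /dmat; split => [MD k | lamM].
  by rewrite -[RHS](congr1 (fun N => N k k) MD) /= eqxx add0r.
by apply: mat_ext => k l; case: eqP => [<-|_]; rewrite ?add0r ?addr0.
Qed.

Lemma lam_ofE n m (n_gt0 : (0 < n)%N) (f : {ffun 'I_n -> 'I_m.+1}) (k : int) :
  lam_of f k = f (ordz n_gt0 k).
Proof. by rewrite /lam_of (big_pred1 (ordz n_gt0 k)) // => i; apply: dvdz_ordz. Qed.

Lemma ordz_ord n (n_gt0 : (0 < n)%N) (i : 'I_n) : ordz n_gt0 i%:Z = i.
Proof. by apply/esym/eqP; rewrite -dvdz_ordz subrr dvdz0. Qed.

Section Aop_entries.

Variables (n r : nat) (x y : idx r).
Hypothesis n_gt0 : (0 < n)%N.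
Local Notation M := (Mmat n x y).

(* The only [lambda] with [M = offdiag M + diag lambda] is the diagonal of [M]. *)
Lemma sum_Lambda_basis1 (m : nat) (j : nvec) : m%:Z = trace n M ->
  \sum_(f : {ffun 'I_n -> 'I_m.+1} | in_Lambda f)
     (vpow n (lam_of f) j)%:R * basis1 n r (madd (offdiag M) (dmat (lam_of f))) x y
  = diag_pow n M j.
Proof.
move=> mE.
have trM : \sum_(i < n) M i i = m%:Z.
  rewrite mE (@big_ord_shift1 _ n_gt0 _ _ _ (fun k => M k k)) // => k.
  exact: Mmat_periodic.
have Mle (i : 'I_n) : (`|M i i| <= m)%N.
  rewrite -lez_nat gez0_abs // -trM (bigD1 i) //= lerDl.
  by apply: sumr_ge0 => i' _; apply: Mmat_ge0.
pose f0 : {ffun 'I_n -> 'I_m.+1} := [ffun i : 'I_n => inord `|M i i|%N].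
have f0E (i : 'I_n) : (f0 i : nat) = `|M i i|%N by rewrite ffunE inordK // ltnS.
have lam0 k : (lam_of f0 k)%:Z = M k k.
  rewrite lam_ofE f0E gez0_abs //; apply: (periodic_mat_dvdz (Mmat_periodic _ _ _)) => //.
  by rewrite dvdz_subC dvdz_ordz.
have f0_Lambda : in_Lambda f0.
  rewrite /in_Lambda -eqz_nat -trM -natz natr_sum; apply/eqP/eq_bigr => i _.
  by rewrite f0E natz gez0_abs.
rewrite (bigD1 f0) //= big1 => [|f /andP[_ ff0]]; last first.
  rewrite /basis1; case: asboolP => [/esym/madd_offdiag_dmat lamM|];
    last by rewrite mulr0.
  case/eqP: ff0; apply/ffunP => i; apply/val_inj/eqP.
  by rewrite /= f0E -eqz_nat gez0_abs // -lamM lam_ofE ordz_ord.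
rewrite /basis1 asboolT ?mulr1 ?addr0; last exact/esym/madd_offdiag_dmat.
rewrite /vpow natr_prod; apply: eq_bigr => i _.
by rewrite natrX -lam0.
Qed.

Lemma Aop_Acoef (B : mat) (j : nvec) :
  (forall k, B k k = 0) -> Aop n r B j x y = Acoef n M B j.
Proof.
move=> B0; rewrite /Aop /Acoef.
have [MB|notMB] := pselect (offdiag_eq M B); last first.
  rewrite (asboolF notMB); case: ifP => // _; case: ifP => // _.
  apply: big1 => f _; rewrite /basis1 asboolF ?mulr0 // => MBf.
  by apply: notMB => k l kl; rewrite MBf /madd /dmat (negbTE kl) addr0.
rewrite (asboolT MB) (offdiag_eqE B0 MB).
have trM := sigma_offdiag_add_trace x y n_gt0.
have tr0 : 0 <= trace n M by apply: sumr_ge0 => k _; apply: Mmat_ge0.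
rewrite asboolF => [|[k [l]]]; last by rewrite /offdiag; case: eqP.
rewrite ifT; last by rewrite -trM lerDl.
by apply: sum_Lambda_basis1; rewrite -trM addrC addKr gez0_abs.
Qed.

End Aop_entries.

(** * Left multiplication by [E[0, r]] *)

Lemma addr_neq_self (h d : int) : d != 0 -> h != h + d.
Proof. by move=> d0; apply/eqP => e; lia. Qed.

Definition shift_at r (x : idx r) (s : 'I_r) (d : int) : idx r :=
  [ffun s' => if s' == s then x s + d else x s'].

Section Shift.

Variables (n r : nat) (x : idx r).

Lemma Mmat_ge1 (k : idx r) (s : 'I_r) : 1 <= Mmat n x k (x s) (k s).
Proof.
rewrite Mmat_sumE (bigD1 s) //= Emat_at lerDl.
by apply: sumr_ge0 => s' _; apply: Emat_ge0.
Qed.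

Lemma offdiag_eq_Mmat_mzero (k : idx r) : offdiag_eq (Mmat n x k) mzero <-> k = x.
Proof.
split => [Mk0|->]; last first.
  by move=> a b ab; rewrite Mmat_sumE big1 // => s _; apply: Emat_offdiag.
apply/ffunP => s; apply/eqP; rewrite eq_sym; apply/negPn/negP => xk.
by have := Mmat_ge1 k s; rewrite Mk0.
Qed.

Lemma shift_at_inj (d : int) : d != 0 -> injective (shift_at x ^~ d).
Proof.
move=> d0 s s' /(congr1 (fun z : idx r => z s)); rewrite !ffunE eqxx.
by case: eqP => [->|_ e] //; exfalso; lia.
Qed.

Lemma offdiag_eq_Mmat_shift_at (s : 'I_r) (h d : int) : (n%:Z %| x s - h)%Z ->
  offdiag_eq (Mmat n x (shift_at x s d)) (Emat n h (h + d)).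
Proof.
move=> xh k l kl; rewrite Mmat_sumE (bigD1 s) //= big1 ?addr0 => [|s' s's].
  by rewrite ffunE eqxx (@Emat_congr n (x s) (x s + d) h (h + d)) //; lia.
by rewrite ffunE (negbTE s's); apply: Emat_offdiag.
Qed.

(* Entry [(h, h + d)] of [Emat] is [1], so exactly one [s] moves from row [h]
   to column [h + d]; every moved [s] is of this kind. *)
Lemma offdiag_eq_Mmat_Emat (k : idx r) (h d : int) : d != 0 ->
  offdiag_eq (Mmat n x k) (Emat n h (h + d)) ->
  exists2 s, (n%:Z %| x s - h)%Z & k = shift_at x s d.
Proof.
move=> d0 MkE.
pose P s := (n%:Z %| x s - h)%Z && (k s == x s + d).
have moved s : x s != k s -> P s.
  move=> xks; have := Mmat_ge1 k s; rewrite MkE // /Emat.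
  by case: ifP => [/andP[xh /eqP e] _|]; [rewrite /P xh; apply/eqP; lia|].
have P1 : #|[pred s | P s]| = 1%N.
  have := MkE _ _ (addr_neq_self h d0); rewrite Emat_at /Mmat.
  move/eqP; rewrite -[1]/(Posz 1%N) eqz_nat => /eqP <-.
  rewrite -sum1_card big_mkcond /=; apply: eq_bigr => s _; rewrite inE /P dvdz_subC.
  by have -> : (h - x s == h + d - k s) = (k s == x s + d) by apply/eqP/eqP; lia.
have [s Ps] := mem_card1 P1.
have /andP[xh /eqP ks] : P s by have := Ps s; rewrite !inE eqxx.
exists s => //; apply/ffunP => s'; rewrite ffunE; case: eqP => [->//|/eqP s's].
apply/eqP; rewrite eq_sym; apply/negPn/negP => /moved Ps'.
by have := Ps s'; rewrite !inE Ps' (negbTE s's).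
Qed.

End Shift.

Lemma diag_pow_vzero n (M : mat) : diag_pow n M vzero = 1.
Proof. by rewrite /diag_pow big1 // => i _; rewrite expr0. Qed.

Lemma opmul_Emat_Aop n r (h d : int) (A : mat) (j : nvec) (x y : idx r) :
  (0 < n)%N -> d != 0 ->
  opmul (Aop n r (Emat n h (h + d)) vzero) (Aop n r A j) x y =
  \sum_(s < r | (n%:Z %| x s - h)%Z) Aop n r A j (shift_at x s d) y.
Proof.
move=> n_gt0 d0; rewrite /opmul.
have E0 k : Emat n h (h + d) k k = 0 by apply/Emat_diag/addr_neq_self.
under eq_fsbigr do rewrite (Aop_Acoef _ _ n_gt0 _ E0) /Acoef diag_pow_vzero.
set r0 := [seq shift_at x s d | s <- enum 'I_r & (n%:Z %| x s - h)%Z].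
have r0E k : (k \in r0) = `[< offdiag_eq (Mmat n x k) (Emat n h (h + d)) >].
  apply/mapP/asboolP => [[s] | /offdiag_eq_Mmat_Emat [//|s xh ->]].
    by rewrite mem_filter => /andP[xh _] ->; apply: offdiag_eq_Mmat_shift_at.
  by exists s; rewrite // mem_filter xh mem_enum.
rewrite (fsbigE r0) //; last first.
- by move=> k _; rewrite r0E; case: asboolP => // _ _; rewrite mul0r.
- by rewrite map_inj_uniq ?filter_uniq -?enumT ?enum_uniq //; exact: shift_at_inj.
under eq_bigl do rewrite in_setT.
rewrite big_map big_filter big_enum_cond /=; apply: eq_bigr => s xh.
by rewrite asboolT ?mul1r //; apply: offdiag_eq_Mmat_shift_at.
Qed.

(** * Transferring one unit between two rows *)

Lemma binomial_sum_addr1 (R : comNzRingType) (X : R) (J : nat) :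
  \sum_(0 <= i < J.+1) 'C(J, i)%:R * X ^+ (J - i) = (X + 1) ^+ J.
Proof.
rewrite exprDn big_mkord; apply: eq_bigr => i _.
by rewrite expr1n mulr1 mulr_natl.
Qed.

Lemma binomial_sum_subr1 (R : comNzRingType) (X : R) (J : nat) :
  \sum_(0 <= i < J.+1) ((-1) ^+ i * 'C(J, i)%:R) * X ^+ (J + 1 - i) =
  X * (X - 1) ^+ J.
Proof.
rewrite exprDn big_mkord mulr_sumr; apply: eq_bigr => i _.
have iJ : (i <= J)%N by rewrite -ltnS.
by rewrite addn1 subSn // exprS -mulr_natl; ring.
Qed.

Lemma diag_pow_split n (q : nat) (M M' : mat) (j j' : nvec) : (1 <= q <= n)%N ->
  (forall i : nat, (1 <= i <= n)%N -> i != q ->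
     M' i%:Z i%:Z = M i%:Z i%:Z /\ j' i%:Z = j i%:Z) ->
  diag_pow n M' j' = (M' q%:Z q%:Z)%:~R ^+ j' q%:Z *
     \prod_(1 <= i < n.+1 | i != q) (M i%:Z i%:Z)%:~R ^+ j i%:Z.
Proof.
move=> qn MM'; rewrite /diag_pow (bigD1_seq q) ?mem_index_iota ?iota_uniq //=.
congr (_ * _); rewrite big_seq_cond [RHS]big_seq_cond; apply: eq_bigr => i.
by rewrite mem_index_iota => /andP[/MM' iM /iM[-> ->]].
Qed.

Section Residue_vectors.

Variable n : nat.
Hypothesis n_gt0 : (0 < n)%N.

Lemma evec_rep1 (c : int) : evec n c (rep1 n_gt0 c) = 1%N.
Proof. by rewrite /evec dvdz_rep1. Qed.

Lemma evec_neq_rep1 (c : int) (i : nat) : (1 <= i <= n)%N -> i != rep1 n_gt0 c ->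
  evec n c i = 0%N.
Proof.
move=> iin ic; rewrite /evec dvdz_subC -(dvdz_subl _ (dvdz_rep1 n_gt0 c)) dvdz_subC.
by rewrite dvdz_nat_range ?rep1_bound // (negbTE ic).
Qed.

Lemma Emat_neq_rep1 (a b : int) (i : nat) (l : int) : (1 <= i <= n)%N ->
  i != rep1 n_gt0 a -> Emat n a b i l = 0.
Proof.
move=> iin ia; apply: Emat_row.
rewrite dvdz_subC -(dvdz_subl _ (dvdz_rep1 n_gt0 a)) dvdz_subC.
by rewrite dvdz_nat_range ?rep1_bound.
Qed.

End Residue_vectors.

Definition mtransfer n (M : mat) (h d c : int) : mat :=
  fun k l => M k l - Emat n h c k l + Emat n (h + d) c k l.

Lemma Mmat_shift_at n r (x y : idx r) (s : 'I_r) (h d : int) : (n%:Z %| x s - h)%Z ->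
  Mmat n (shift_at x s d) y = mtransfer n (Mmat n x y) h d (y s - x s + h).
Proof.
move=> xh; apply: mat_ext => k l; rewrite /mtransfer !Mmat_sumE.
rewrite (bigD1 s) //= [in RHS](bigD1 s) //= ffunE eqxx.
rewrite (@Emat_congr n (x s + d) (y s) (h + d) (y s - x s + h)); first last.
- by lia.
- by have -> : x s + d - (h + d) = x s - h by ring.
rewrite (@Emat_congr n (x s) (y s) h (y s - x s + h)) //; last by lia.
rewrite (eq_bigr (fun s' => Emat n (x s') (y s') k l)) => [|s' s's]; last first.
  by rewrite ffunE (negbTE s's).
ring.
Qed.

Lemma offdiag_eq_equiv (M M' B B' : mat) :
  (forall k l, k != l -> (M k l = B k l <-> M' k l = B' k l)) ->
  `[< offdiag_eq M B >] = `[< offdiag_eq M' B' >].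
Proof.
by move=> MB; apply: asbool_equiv_eq; split => MB' k l kl; apply/(MB k l kl); apply: MB'.
Qed.

Lemma Acoef_transfer n (M A : mat) (j : nvec) (h d c : int) : c != h -> c != h + d ->
  Acoef n (mtransfer n M h d c) A j =
  Acoef n M (msub (madd A (Emat n h c)) (Emat n (h + d) c)) j.
Proof.
move=> ch chd; rewrite /Acoef.
rewrite (@offdiag_eq_equiv _ M _ (msub (madd A (Emat n h c)) (Emat n (h + d) c))).
  case: asboolP => // _; rewrite /diag_pow; apply: eq_bigr => i _.
  by rewrite /mtransfer !Emat_diag ?subr0 ?addr0 // eq_sym.
by move=> k l kl; rewrite /mtransfer /msub /madd; split => e; lia.
Qed.

Section Transfer.

Variables (n : nat) (M A : mat) (j : nvec) (h d : int).
Hypotheses (n_gt0 : (0 < n)%N) (d_neq0 : d != 0).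
Hypotheses (M_periodic : periodic_mat n M) (j_periodic : periodic_vec n j).

Lemma sum_Acoef_transfer_row :
  \sum_(0 <= i < (j h).+1) ((-1) ^+ i * 'C(j h, i)%:R) *
     Acoef n M (msub A (Emat n (h + d) h))
       (vsub (vadd j (evec n h)) (vscale i (evec n h)))
  = (M h h)%:~R * Acoef n (mtransfer n M h d h) A j.
Proof.
have hhd := addr_neq_self h d_neq0.
rewrite /Acoef (@offdiag_eq_equiv (mtransfer n M h d h) M A (msub A (Emat n (h + d) h))).
  case: asboolP => _; last by rewrite mulr0 big1 // => i _; rewrite mulr0.
  set q := rep1 n_gt0 h; have qn := rep1_bound n_gt0 h; have qh := dvdz_rep1 n_gt0 h.
  have Mq : M q q = M h h by apply: periodic_mat_dvdz.
  have jq : j q = j h by apply: periodic_vec_dvdz.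
  pose R : rat := \prod_(1 <= i < n.+1 | i != q) (M i%:Z i%:Z)%:~R ^+ j i%:Z.
  have powE i : diag_pow n M (vsub (vadd j (evec n h)) (vscale i (evec n h))) =
      (M h h)%:~R ^+ (j h + 1 - i) * R.
    rewrite (@diag_pow_split n q M M j) // => [|i' i'n i'q].
      by rewrite /vsub /vadd /vscale evec_rep1 muln1 jq Mq.
    by rewrite /vsub /vadd /vscale evec_neq_rep1 // muln0 addn0 subn0.
  have pow_transfer : diag_pow n (mtransfer n M h d h) j = ((M h h)%:~R - 1) ^+ j h * R.
    rewrite (@diag_pow_split n q M (mtransfer n M h d h) j j) // => [|i' i'n i'q].
      rewrite /mtransfer (@Emat_diag n (h + d) h) 1?eq_sym // addr0 jq.
      by rewrite /Emat qh eqxx rmorphB /= Mq.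
    rewrite /mtransfer (@Emat_diag n (h + d) h) 1?eq_sym //.
    by rewrite Emat_neq_rep1 // subr0 addr0.
  under eq_big_nat => i _ do rewrite powE mulrA.
  by rewrite -mulr_suml binomial_sum_subr1 pow_transfer mulrA.
by move=> k l kl; rewrite /mtransfer /msub Emat_offdiag // subr0; split => e; lia.
Qed.

Lemma sum_Acoef_transfer_col :
  (A h (h + d) + 1)%:~R *
  \sum_(0 <= i < (j (h + d)).+1) 'C(j (h + d), i)%:R *
     Acoef n M (madd A (Emat n h (h + d))) (vsub j (vscale i (evec n (h + d))))
  = (M h (h + d))%:~R * Acoef n (mtransfer n M h d (h + d)) A j.
Proof.
have hhd := addr_neq_self h d_neq0.
rewrite /Acoef (@offdiag_eq_equiv (mtransfer n M h d (h + d)) M A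
                                  (madd A (Emat n h (h + d)))).
  case: asboolP => MA; last by rewrite mulr0 big1 ?mulr0 // => i _; rewrite mulr0.
  have -> : M h (h + d) = A h (h + d) + 1 by rewrite MA // /madd Emat_at.
  set q := rep1 n_gt0 (h + d).
  have qn := rep1_bound n_gt0 (h + d); have qh := dvdz_rep1 n_gt0 (h + d).
  have jq : j q = j (h + d) by apply: periodic_vec_dvdz.
  pose R : rat := \prod_(1 <= i < n.+1 | i != q) (M i%:Z i%:Z)%:~R ^+ j i%:Z.
  have powE i : diag_pow n M (vsub j (vscale i (evec n (h + d)))) =
      (M q q)%:~R ^+ (j (h + d) - i) * R.
    rewrite (@diag_pow_split n q M M j) // => [|i' i'n i'q].
      by rewrite /vsub /vscale evec_rep1 muln1 jq.
    by rewrite /vsub /vscale evec_neq_rep1 // muln0 subn0.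
  have pow_transfer : diag_pow n (mtransfer n M h d (h + d)) j =
      ((M q q)%:~R + 1) ^+ j (h + d) * R.
    rewrite (@diag_pow_split n q M (mtransfer n M h d (h + d)) j j) // => [|i' i'n i'q].
      by rewrite /mtransfer (@Emat_diag n h (h + d)) // subr0 jq /Emat qh eqxx rmorphD.
    by rewrite /mtransfer (@Emat_diag n h (h + d)) // Emat_neq_rep1 // subr0 addr0.
  under eq_big_nat => i _ do rewrite powE mulrA.
  by rewrite -mulr_suml binomial_sum_addr1 pow_transfer.
by move=> k l kl; rewrite /mtransfer /madd Emat_offdiag // addr0; split => e; lia.
Qed.

End Transfer.

Lemma Acoef_neg n (M B : mat) (j : nvec) (k l : int) :
  k != l -> 0 <= M k l -> B k l < 0 -> Acoef n M B j = 0.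
Proof. by move=> kl M0 B0; rewrite /Acoef asboolF // => /(_ k l kl) MB; lia. Qed.

Lemma Acoef_offdiag_mul n (M B : mat) (j : nvec) (k l : int) : k != l ->
  (B k l)%:~R * Acoef n M B j = (M k l)%:~R * Acoef n M B j.
Proof. by move=> kl; rewrite /Acoef; case: asboolP => [MB|]; rewrite ?MB ?mulr0. Qed.

Lemma Mmat_count n r (x y : idx r) (h c : int) : (Mmat n x y h c)%:~R =
  \sum_(s < r | (n%:Z %| x s - h)%Z) (if c == y s - x s + h then 1 else 0) :> rat.
Proof.
rewrite /Mmat -[(Posz _)%:~R]/((_ : nat)%:R) natr_sum [RHS]big_mkcond /=.
apply: eq_bigr => s _; rewrite dvdz_subC.
have -> : (h - x s == c - y s) = (c == y s - x s + h) by apply/eqP/eqP; lia.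
by case: (_ %| _)%Z; case: (_ == _).
Qed.

Section Product.

Variables (n r : nat) (h d : int) (A : mat) (j : nvec) (x y : idx r).
Hypotheses (n_gt0 : (0 < n)%N) (d_neq0 : d != 0).
Hypotheses (A_diag : forall k, A k k = 0) (j_periodic : periodic_vec n j).
Local Notation M := (Mmat n x y).
Local Notation col s := (y s - x s + h).

Lemma sum_Aop_shift_at :
  \sum_(s < r | (n%:Z %| x s - h)%Z) Aop n r A j (shift_at x s d) y =
  \sum_(s < r | (n%:Z %| x s - h)%Z)
     (if (col s != h) && (col s != h + d)
      then Acoef n M (msub (madd A (Emat n h (col s))) (Emat n (h + d) (col s))) j
      else 0)
  + (M h h)%:~R * Acoef n (mtransfer n M h d h) A j
  + (M h (h + d))%:~R * Acoef n (mtransfer n M h d (h + d)) A j.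
Proof.
have hhd := addr_neq_self h d_neq0.
rewrite !Mmat_count !mulr_suml -!big_split /=; apply: eq_bigr => s xh.
rewrite Aop_Acoef // (Mmat_shift_at _ _ xh).
have [->|ch] := eqVneq (col s) h.
  by rewrite [h + d == h]eq_sym (negbTE hhd) /=; ring.
have [->|chd] := eqVneq (col s) (h + d); first by rewrite /=; ring.
by rewrite Acoef_transfer //=; ring.
Qed.

Lemma fsum_Aop_other_cols :
  \sum_(c \in [set c | [/\ c != h, c != h + d & 1 <= A (h + d) c]])
     (A h c + 1)%:~R * Aop n r (msub (madd A (Emat n h c)) (Emat n (h + d) c)) j x y =
  \sum_(s < r | (n%:Z %| x s - h)%Z)
     (if (col s != h) && (col s != h + d)
      then Acoef n M (msub (madd A (Emat n h (col s))) (Emat n (h + d) (col s))) j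
      else 0).
Proof.
pose B c := msub (madd A (Emat n h c)) (Emat n (h + d) c).
pose g c : rat := Acoef n M (B c) j.
have Emat_h c : Emat n h c (h + d) c = 0.
  by rewrite /Emat (_ : h + d - h == c - c = false) ?andbF //; apply/eqP; lia.
have Emat_hd c : Emat n (h + d) c h c = 0.
  by rewrite /Emat (_ : h - (h + d) == c - c = false) ?andbF //; apply/eqP; lia.
rewrite (eq_fsbigr (fun c =>
  \sum_(s < r | (n%:Z %| x s - h)%Z) if c == col s then g (col s) else 0)).
  rewrite fsum_delta; apply: eq_bigr => s _.
  case: (boolP ((col s != h) && (col s != h + d))) => [/andP[ch chd]|/nandP nS];
    last first.
    by case: ifP => // /asboolP[]; case: nS => /negP.
  case: ifP => // /asboolP S_c.
  apply/esym/(@Acoef_neg n M _ j (h + d) (col s)); rewrite 1?eq_sym //.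
  have A_lt1 : ~ 1 <= A (h + d) (col s) by move=> ?; apply: S_c; split.
  by rewrite /B /msub /madd Emat_h Emat_at; lia.
move=> c /set_mem[ch chd _].
rewrite Aop_Acoef // => [|k]; last first.
  by rewrite /msub /madd A_diag !Emat_diag ?subr0 ?add0r // eq_sym.
rewrite -/(B c) -/(g c) -(_ : B c h c = A h c + 1); last first.
  by rewrite /B /msub /madd Emat_at Emat_hd subr0.
rewrite Acoef_offdiag_mul 1?eq_sym // Mmat_count mulr_suml; apply: eq_bigr => s _.
by case: eqP => [->|]; rewrite ?mul1r ?mul0r.
Qed.

Lemma Emat_mul_Aop_entry :
  opmul (Aop n r (Emat n h (h + d)) vzero) (Aop n r A j) x y =
  \sum_(c \in [set c | [/\ c != h, c != h + d & 1 <= A (h + d) c]])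
     (A h c + 1)%:~R * Aop n r (msub (madd A (Emat n h c)) (Emat n (h + d) c)) j x y
  + (\sum_(0 <= i < (j h).+1) ((-1) ^+ i * 'C(j h, i)%:R) *
       Aop n r (msub A (Emat n (h + d) h))
         (vsub (vadd j (evec n h)) (vscale i (evec n h))) x y
     + (A h (h + d) + 1)%:~R *
       \sum_(0 <= i < (j (h + d)).+1) 'C(j (h + d), i)%:R *
         Aop n r (madd A (Emat n h (h + d))) (vsub j (vscale i (evec n (h + d)))) x y).
Proof.
have hhd := addr_neq_self h d_neq0; have M_periodic := Mmat_periodic n x y.
rewrite opmul_Emat_Aop // sum_Aop_shift_at fsum_Aop_other_cols -addrA.
congr (_ + (_ + _)).
  rewrite -sum_Acoef_transfer_row //.
  apply: eq_bigr => i _; rewrite Aop_Acoef // => k.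
  by rewrite /msub A_diag Emat_diag ?subr0 // eq_sym.
rewrite -sum_Acoef_transfer_col //.
congr (_ * _); apply: eq_bigr => i _; rewrite Aop_Acoef // => k.
by rewrite /madd A_diag Emat_diag ?add0r.
Qed.

End Product.

Lemma Emat_mul_Aop n r (h d : int) (A : mat) (j : nvec) :
  (0 < n)%N -> d != 0 -> periodic_vec n j -> (forall k, A k k = 0) ->
  opmul (Aop n r (Emat n h (h + d)) vzero) (Aop n r A j)
  = opadd
      (opsumZ [set c : int | [/\ c != h, c != h + d & 1 <= A (h + d) c]]
         (fun c => opscale ((A h c + 1)%:~R)
                     (Aop n r (msub (madd A (Emat n h c)) (Emat n (h + d) c)) j)))
    (opadd
      (opsumN (j h) (fun i => opscale ((-1) ^+ i * ('C(j h, i))%:R)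
            (Aop n r (msub A (Emat n (h + d) h))
                     (vsub (vadd j (evec n h)) (vscale i (evec n h))))))
      (opscale ((A h (h + d) + 1)%:~R)
         (opsumN (j (h + d)) (fun i => opscale ('C(j (h + d), i))%:R
            (Aop n r (madd A (Emat n h (h + d)))
                     (vsub j (vscale i (evec n (h + d))))))))).
Proof.
move=> n_gt0 d_neq0 j_periodic A_diag; apply/funext => x; apply/funext => y.
exact: Emat_mul_Aop_entry.
Qed.

Lemma opmul_mzero_Aop_entry n r (e j : nvec) (A : mat) (x y : idx r) : (0 < n)%N ->
  opmul (Aop n r mzero e) (Aop n r A j) x y = Aop n r mzero e x x * Aop n r A j x y.
Proof.
move=> n_gt0; rewrite /opmul (fsbigE [:: x]) // => [|k _].
  by rewrite big_cons big_nil in_setT /= addr0.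
rewrite inE (Aop_Acoef _ _ n_gt0) // /Acoef => kx.
case: asboolP => [/offdiag_eq_Mmat_mzero xk|].
  by rewrite xk eqxx in kx.
by rewrite mul0r.
Qed.

Lemma mzero_mul_Aop n r (t : int) (A : mat) (j : nvec) :
  (0 < n)%N -> (forall k, A k k = 0) ->
  opmul (Aop n r mzero (evec n t)) (Aop n r A j)
  = opadd (Aop n r A (vadd j (evec n t)))
          (opscale ((\sum_(s \in [set: int]) A t s)%:~R) (Aop n r A j)).
Proof.
move=> n_gt0 A_diag; apply/funext => x; apply/funext => y.
rewrite opmul_mzero_Aop_entry // /opadd /opscale !(Aop_Acoef _ _ n_gt0) // /Acoef.
rewrite asboolT; last exact/offdiag_eq_Mmat_mzero.
case: asboolP => MA; last by rewrite !mulr0 addr0.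
rewrite (offdiag_eqE A_diag MA); set M := Mmat n x y.
set q := rep1 n_gt0 t; have qn := rep1_bound n_gt0 t; have qt := dvdz_rep1 n_gt0 t.
have Mq (N : mat) : periodic_mat n N -> N q q = N t t.
  by move=> Np; apply: periodic_mat_dvdz.
pose R : rat := \prod_(1 <= i < n.+1 | i != q) (M i%:Z i%:Z)%:~R ^+ j i%:Z.
have pow_self : diag_pow n (Mmat n x x) (evec n t) = (Mmat n x x t t)%:~R.
  rewrite (@diag_pow_split n q (Mmat n x x) _ (evec n t)) // evec_rep1 expr1 Mq.
  rewrite ?big1_seq ?mulr1 //.
    by move=> i /andP[iq]; rewrite mem_index_iota => iin; rewrite evec_neq_rep1 ?expr0.
  exact: Mmat_periodic.
have pow_add : diag_pow n M (vadd j (evec n t)) = (M t t)%:~R ^+ (j q + 1) * R.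
  rewrite (@diag_pow_split n q M M j) /vadd ?evec_rep1 ?Mq //; first exact: Mmat_periodic.
  by move=> i iin iq; rewrite evec_neq_rep1 ?addn0.
have pow_j : diag_pow n M j = (M t t)%:~R ^+ j q * R.
  by rewrite (@diag_pow_split n q M M j) ?Mq //; exact: Mmat_periodic.
rewrite pow_self pow_add pow_j (Mmat_diag_self _ _ y) rmorphD /= addn1 exprS; ring.
Qed.

Lemma fsum_shift (R : nmodType) (P : set int) (F : int -> R) (d : int) :
  \sum_(c \in P) F c = \sum_(s \in [set s | P (s + d)]) F (s + d).
Proof.
rewrite -(fsbig_image _ (fun s => s + d)) /=; last by move=> a b _ _ /addIr.
apply: eq_fsbigl; apply/seteqP; split => [c Pc|_ [s Ps <-] //].
by exists (c - d); rewrite /= subrK.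
Qed.

Lemma evec_congr n (a b : int) : (n%:Z %| a - b)%Z -> evec n a = evec n b.
Proof.
move=> ab; apply/funext => k; rewrite /evec dvdz_subC [in RHS]dvdz_subC.
by rewrite (dvdz_subl _ ab).
Qed.

Lemma Emat_period_mul_Aop n r (h m : int) (A : mat) (j : nvec) :
  (0 < n)%N -> m != 0 -> periodic_vec n j -> periodic_mat n A -> (forall k, A k k = 0) ->
  opmul (Aop n r (Emat n h (h + m * n%:Z)) vzero) (Aop n r A j)
  = opadd
      (opsumZ [set s : int | [/\ s != h, s != h - m * n%:Z & 1 <= A h s]]
         (fun s => opscale ((A h (s + m * n%:Z) + 1)%:~R)
            (Aop n r (msub (madd A (Emat n h (s + m * n%:Z))) (Emat n h s)) j)))
    (opadd
      (opsumN (j h) (fun t0 => opscale ((A h (h + m * n%:Z) + 1)%:~R * ('C(j h, t0))%:R)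
            (Aop n r (madd A (Emat n h (h + m * n%:Z)))
                     (vsub j (vscale t0 (evec n h))))))
      (opsumN (j h) (fun t0 => opscale ((-1) ^+ t0 * ('C(j h, t0))%:R)
            (Aop n r (msub A (Emat n h (h - m * n%:Z)))
                     (vsub (vadd j (evec n h)) (vscale t0 (evec n h))))))).
Proof.
move=> n_gt0 m_neq0 j_periodic A_periodic A_diag; set d := m * n%:Z.
have d_neq0 : d != 0 by rewrite mulf_neq0 // eqz_nat -lt0n.
have hd_h : (n%:Z %| h + d - h)%Z by rewrite addrAC subrr add0r dvdz_mull.
have A_d k l : A (k + d) (l + d) = A k l by apply: periodic_matZ.
clearbody d.
rewrite Emat_mul_Aop //; apply/funext => x; apply/funext => y.
rewrite /opadd /opsumZ /opsumN /opscale [X in _ = _ + X]addrC.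
congr (_ + (_ + _)).
- have shiftS :
      [set s : int | [/\ s + d != h, s + d != h + d & 1 <= A (h + d) (s + d)]]%classic =
      [set s : int | [/\ s != h, s != h - d & 1 <= A h s]]%classic.
    apply/seteqP; split => s /= [s1 s2 s3]; (split; [apply/eqP; lia | apply/eqP; lia |]).
      by rewrite -A_d.
    by rewrite A_d.
  rewrite (fsum_shift _ _ d) shiftS; apply: eq_fsbigr => s _.
  by rewrite (@Emat_congr n (h + d) (s + d) h s) //; ring.
- by rewrite (@Emat_congr n (h + d) h h (h - d)) //; ring.
rewrite (periodic_vec_dvdz j_periodic hd_h) (evec_congr hd_h) mulr_sumr.
by apply: eq_bigr => i _; rewrite mulrA.
Qed.

Unset Implicit Arguments.
Set Strict Implicit.

Theorem theorem6p2p2 (n : nat) (hn : (2 <= n)%N) (h t : int)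
    (Hh : 1 <= h <= n%:Z) (Ht : 1 <= t <= n%:Z)
    (j : nvec) (Hj : periodic_vec n j) (A : mat) (HA : in_Theta_pm n A)
    (r : nat) :
  (* (1) *)
  opmul (Aop n r mzero (evec n t)) (Aop n r A j)
  = opadd (Aop n r A (vadd j (evec n t)))
          (opscale ((\sum_(s \in [set: int]) A t s)%:~R) (Aop n r A j))
  /\
  (* (2) *)
  (forall eps : int, eps = 1 \/ eps = -1 ->
    opmul (Aop n r (Emat n h (h + eps)) vzero) (Aop n r A j)
    = opadd
        (opsumZ [set i : int | [/\ i != h, i != h + eps & 1 <= A (h + eps) i]]
           (fun i => opscale ((A h i + 1)%:~R)
                       (Aop n r (msub (madd A (Emat n h i)) (Emat n (h + eps) i)) j)))
      (opadd
        (opsumN (j h) (fun i => opscale ((-1) ^+ i * ('C(j h, i))%:R)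
              (Aop n r (msub A (Emat n (h + eps) h))
                       (vsub (vadd j (evec n h)) (vscale i (evec n h))))))
        (opscale ((A h (h + eps) + 1)%:~R)
           (opsumN (j (h + eps)) (fun i => opscale ('C(j (h + eps), i))%:R
              (Aop n r (madd A (Emat n h (h + eps)))
                       (vsub j (vscale i (evec n (h + eps))))))))))
  /\
  (* (3) *)
  (forall m : int, m != 0 ->
    opmul (Aop n r (Emat n h (h + m * n%:Z)) vzero) (Aop n r A j)
    = opadd
        (opsumZ [set s : int | [/\ s != h, s != h - m * n%:Z & 1 <= A h s]]
           (fun s => opscale ((A h (s + m * n%:Z) + 1)%:~R)
              (Aop n r (msub (madd A (Emat n h (s + m * n%:Z))) (Emat n h s)) j)))
      (opadd
        (opsumN (j h) (fun t0 => opscale ((A h (h + m * n%:Z) + 1)%:~R * ('C(j h, t0))%:R)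
              (Aop n r (madd A (Emat n h (h + m * n%:Z)))
                       (vsub j (vscale t0 (evec n h))))))
        (opsumN (j h) (fun t0 => opscale ((-1) ^+ t0 * ('C(j h, t0))%:R)
              (Aop n r (msub A (Emat n h (h - m * n%:Z)))
                       (vsub (vadd j (evec n h)) (vscale t0 (evec n h)))))))).
Proof.
have n_gt0 : (0 < n)%N by apply: ltnW.
case: HA => A_periodic _ _ A_diag.
split; first exact: mzero_mul_Aop.
split=> [eps eps_unit | m m_neq0]; last exact: Emat_period_mul_Aop.
by apply: Emat_mul_Aop => //; case: eps_unit => ->.
Qed.
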